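(* Consider the robust Bayesian persuasion setting described in the context, for any fixed class $\mathcal{U}$ of Receiver utilities. Then $\mathrm{Apr}\le \frac{1}{\mathrm{Reg}}-1$ (with $\frac10$ interpreted as $+\infty$).
   Context: Setting: a finite state space $\Omega$ and a publicly known prior $\mu\in\Delta(\Omega)$ with full support. A signaling scheme is a stochastic map $\pi$ from $\Omega$ to a (finite or infinite) signal set $S$; Sender commits to $\pi$, the state $\omega\sim\mu$ is drawn, a signal $s\sim\pi(\omega)$ is sent, and Receiver forms the Bayesian posterior $p(s)\in\Delta(\Omega)$. Receiver has actions $\{0,1\}$ and utility $u_r:\Omega\times\{0,1\}\to\mathbb{R}$ with $u_r(\omega,0)=0$; Receiver adopts (action 1) at posterior $p$ iff $\mathbb{E}_{\omega'\sim p}[u_r(\omega',1)]\ge0$. Sender's utility is $u(\pi,u_r)=\Pr_s[\text{Receiver adopts at }p(s)]\in[0,1]$, and $u^*(u_r)=\sup_\pi u(\pi,u_r)$. For a class $\mathcal{U}$ of Receiver utilities: $\mathrm{Reg}=\inf_\pi\sup_{u_r\in\mathcal{U}}\{u^*(u_r)-u(\pi,u_r)\}$, and $\mathrm{Apr}=\sup_\pi\inf_{u_r\in\mathcal{U}}\frac{u(\pi,u_r)}{u^*(u_r)}$, where the ratio is defined to be $1$ when $u^*(u_r)=0$. *)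

From HB Require Import structures.
From mathcomp Require Import all_boot all_order all_algebra.
From mathcomp Require Import all_classical all_reals all_analysis.
Set Implicit Arguments. Unset Strict Implicit. Unset Printing Implicit Defensive.
Import Order.TTheory GRing.Theory Num.Theory.
Local Open Scope classical_set_scope.
Local Open Scope ring_scope.

(* A signaling scheme pi : Omega -> Delta(S) on an arbitrary (finite or
   infinite) measurable signal space S, given by the densities
   f w = d pi(w) / d nu with respect to a reference measure nu on S.
   (Every Markov kernel from a finite Omega has this form, e.g. with
   nu = sum_w pi(w).)  pi(w)(A) = \int_A f w dnu. *)
Record scheme (R : realType) (Omega : finType) := Scheme {
  sch_disp : measure_display;
  sch_S : measurableType sch_disp;
  sch_nu : {measure set sch_S -> \bar R};
  sch_f : Omega -> sch_S -> R;
  sch_f_ge0 : forall w s, 0 <= sch_f w s;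
  sch_f_meas : forall w, measurable_fun setT (sch_f w);
  sch_f_int1 : forall w, (\int[sch_nu]_s (sch_f w s)%:E = 1)%E }.

Arguments sch_S {R Omega} _.
Arguments sch_nu {R Omega} _.
Arguments sch_f {R Omega} _ _ _.

Section Persuasion.
Local Unset Implicit Arguments.
Variables (R : realType) (Omega : finType).

(* density (w.r.t. nu) of the marginal law of the signal s, under prior mu *)
Definition sig_density (mu : Omega -> R) (pi : scheme R Omega)
  (s : sch_S pi) : R := \sum_(w : Omega) mu w * sch_f pi w s.

Definition posterior (mu : Omega -> R) (pi : scheme R Omega)
  (s : sch_S pi) (w : Omega) : R :=
  mu w * sch_f pi w s / sig_density mu pi s.

(* Receiver utility u_r : Omega -> {0,1} -> R  (false = action 0, true = action 1);
   Receiver adopts at posterior p iff E_{w~p}[u_r(w,1)] >= 0 *)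
Definition adopts (u : Omega -> bool -> R) (p : Omega -> R) : bool :=
  0 <= \sum_(w : Omega) p w * u w true.

Definition sender_util (mu : Omega -> R) (pi : scheme R Omega)
  (u : Omega -> bool -> R) : \bar R :=
  (\int[sch_nu pi]_s
     (sig_density mu pi s * (adopts u (posterior mu pi s))%:R)%:E)%E.

Definition ustar (mu : Omega -> R) (u : Omega -> bool -> R) : \bar R :=
  ereal_sup [set x | exists pi : scheme R Omega, sender_util mu pi u = x].

Definition regret_of (mu : Omega -> R) (U : set (Omega -> bool -> R))
  (pi : scheme R Omega) : \bar R :=
  ereal_sup [set (ustar mu u - sender_util mu pi u)%E | u in U].

Definition Reg (mu : Omega -> R) (U : set (Omega -> bool -> R)) : \bar R :=
  ereal_inf [set x | exists pi : scheme R Omega, regret_of mu U pi = x].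

Definition ratio (mu : Omega -> R) (pi : scheme R Omega)
  (u : Omega -> bool -> R) : \bar R :=
  if ustar mu u == 0%E then 1%E
  else (fine (sender_util mu pi u) / fine (ustar mu u))%:E.

Definition Apr (mu : Omega -> R) (U : set (Omega -> bool -> R)) : \bar R :=
  ereal_sup [set x | exists pi : scheme R Omega,
                      ereal_inf [set ratio mu pi u | u in U] = x].

End Persuasion.

Arguments sig_density {R Omega}.
Arguments posterior {R Omega}.
Arguments adopts {R Omega}.
Arguments sender_util {R Omega}.
Arguments ustar {R Omega}.
Arguments regret_of {R Omega}.
Arguments Reg {R Omega}.
Arguments ratio {R Omega}.
Arguments Apr {R Omega}.

From Pilot Require Import Defs.
From HB Require Import structures.
From mathcomp Require Import all_boot all_order all_algebra.
From mathcomp Require Import all_classical all_reals all_analysis.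
From mathcomp Require Import ring lra.
Set Implicit Arguments. Unset Strict Implicit. Unset Printing Implicit Defensive.
Import Order.TTheory GRing.Theory Num.Theory.
Local Open Scope classical_set_scope.
Local Open Scope ring_scope.

(* If every ratio u(pi,u)/u^*(u) of a scheme pi is at least a, then its regret
   against each u is u^*(u) - u(pi,u) <= u^*(u) (1 - a) <= 1 - a, since
   u^*(u) <= 1.  Hence Reg <= 1 - a for every such a, i.e. Apr <= 1 - Reg,
   and 1 - r <= 1/r - 1 for r > 0 because r + 1/r >= 2. *)

(* No measurability is required: on nonnegative functions the integral is a
   supremum over the simple functions below the integrand. *)
Lemma ge0_le_integralT d (T : measurableType d) (R : realType)
    (nu : {measure set T -> \bar R}) (f g : T -> \bar R) :
  (forall x, (0 <= f x)%E) -> (forall x, (f x <= g x)%E) ->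
  (\int[nu]_x f x <= \int[nu]_x g x)%E.
Proof.
move=> f_ge0 fg.
have g_ge0 x : (0 <= g x)%E by exact: le_trans (f_ge0 x) (fg x).
rewrite (ge0_integralTE _ f_ge0) (ge0_integralTE _ g_ge0).
apply: ereal_sup_le => _ [h hf <-]; exists h => //= x.
exact: le_trans (hf x) (fg x).
Qed.

Lemma onem_le_invr_sub1 (R : realFieldType) (r : R) : 0 < r -> 1 - r <= r^-1 - 1.
Proof.
move=> r_gt0; rewrite -subr_ge0.
have -> : r^-1 - 1 - (1 - r) = (r - 1) ^+ 2 / r by field; rewrite gt_eqF.
by rewrite divr_ge0 ?sqr_ge0 ?ltW.
Qed.

Section SenderUtility.
Variables (R : realType) (Omega : finType) (mu : Omega -> R).
Hypothesis mu_pos : forall w, 0 < mu w.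
Hypothesis mu_sum : \sum_(w : Omega) mu w = 1.
Implicit Types (pi : scheme R Omega) (u : Omega -> bool -> R).

Lemma sig_density_ge0 pi s : 0 <= sig_density mu pi s.
Proof.
by apply: sumr_ge0 => w _; rewrite mulr_ge0 ?sch_f_ge0 ?ltW.
Qed.

Lemma integral_sig_density pi :
  (\int[sch_nu pi]_s (sig_density mu pi s)%:E = 1)%E.
Proof.
rewrite /sig_density; under eq_integral do rewrite -sumEFin.
rewrite ge0_integral_sum //; last 2 first.
- move=> w; apply/measurable_realfun.measurable_EFinP.
  exact/measurable_realfun.measurable_funM/sch_f_meas.
- by move=> w s _; rewrite lee_fin mulr_ge0 ?sch_f_ge0 ?ltW.
under eq_bigr => w _.
  under eq_integral do rewrite EFinM.
  rewrite ge0_integralZl_EFin ?sch_f_int1 ?mule1 ?ltW //; last 2 first.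
  - by move=> s _; rewrite lee_fin sch_f_ge0.
  - exact/measurable_realfun.measurable_EFinP/sch_f_meas.
  over.
by rewrite sumEFin mu_sum.
Qed.

Lemma sender_util_ge0 pi u : (0 <= sender_util mu pi u)%E.
Proof.
by apply: integral_ge0 => s _; rewrite lee_fin mulr_ge0 ?sig_density_ge0.
Qed.

Lemma sender_util_le1 pi u : (sender_util mu pi u <= 1)%E.
Proof.
rewrite -(integral_sig_density pi); apply: ge0_le_integralT => s.
  by rewrite lee_fin mulr_ge0 ?sig_density_ge0.
by rewrite lee_fin; case: adopts; rewrite ?mulr1 ?mulr0 ?sig_density_ge0.
Qed.

Lemma sender_util_le_ustar pi u : (sender_util mu pi u <= ustar mu u)%E.
Proof. by apply: ereal_sup_ubound; exists pi. Qed.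

Lemma ustar_le1 u : (ustar mu u <= 1)%E.
Proof. by apply: ge_ereal_sup => _ [pi <-]; exact: sender_util_le1. Qed.

Definition uninformative : scheme R Omega.
Proof.
refine (@Scheme R Omega _ R \d_(0 : R) (fun _ _ => 1) _ _ _).
- by move=> *; exact: ler01.
- by move=> w; exact: measurable_cst.
- by move=> w; rewrite integral_cst //= diracE in_setT mule1.
Defined.

Lemma ustar_ge0 u : (0 <= ustar mu u)%E.
Proof.
exact: le_trans (sender_util_ge0 uninformative u)
                (sender_util_le_ustar uninformative u).
Qed.

Lemma sender_util_fin_num pi u : sender_util mu pi u \is a fin_num.
Proof.
by rewrite ge0_fin_numE ?sender_util_ge0 // (le_lt_trans (sender_util_le1 _ _)) ?ltry.
Qed.

Lemma ustar_fin_num u : ustar mu u \is a fin_num.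
Proof. by rewrite ge0_fin_numE ?ustar_ge0 // (le_lt_trans (ustar_le1 _)) ?ltry. Qed.

Lemma ratio_ge0 pi u : (0 <= Defs.ratio mu pi u)%E.
Proof.
rewrite /Defs.ratio; case: ifP => // _.
by rewrite lee_fin divr_ge0 ?fine_ge0 ?sender_util_ge0 ?ustar_ge0.
Qed.

Lemma ustar_sub_util_le_onem pi u (a : R) : (a%:E <= Defs.ratio mu pi u)%E ->
  (ustar mu u - sender_util mu pi u <= (1 - a)%:E)%E.
Proof.
have := sender_util_le_ustar pi u; have := sender_util_ge0 pi u.
have := ustar_le1 u; rewrite /Defs.ratio.
rewrite -(fineK (sender_util_fin_num pi u)) -(fineK (ustar_fin_num u)).
move: (fine _) (fine _) => t s; rewrite !lee_fin eqe => s_le1 t_ge0 t_le_s.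
have [s0|s_neq0] := eqVneq s 0; first by rewrite s0 lee_fin; lra.
have s_gt0 : 0 < s by rewrite lt_def s_neq0 (le_trans t_ge0).
rewrite lee_fin /= ler_pdivlMr // => as_le_t.
have a_le1 : a <= 1 by rewrite -(ler_pM2r s_gt0) mul1r (le_trans as_le_t).
nra.
Qed.

Variable U : set (Omega -> bool -> R).
Hypothesis U_nonempty : U !=set0.

Lemma regret_of_ge0 pi : (0 <= regret_of mu U pi)%E.
Proof.
have [u Uu] := U_nonempty.
apply: le_trans (ereal_sup_ubound _); last by exists u.
by rewrite subre_ge0 ?sender_util_le_ustar ?ustar_fin_num.
Qed.

Lemma regret_of_le_onem pi (a : R) :
  (forall u, U u -> (a%:E <= Defs.ratio mu pi u)%E) ->
  (regret_of mu U pi <= (1 - a)%:E)%E.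
Proof.
move=> ratio_ge_a; apply: ge_ereal_sup => _ [u Uu <-].
exact/ustar_sub_util_le_onem/ratio_ge_a.
Qed.

Lemma Reg_le_regret_of pi : (Reg mu U <= regret_of mu U pi)%E.
Proof. by apply: ereal_inf_lbound; exists pi. Qed.

Lemma Reg_ge0 : (0 <= Reg mu U)%E.
Proof. by apply: le_ereal_inf_tmp => _ [pi <-]; exact: regret_of_ge0. Qed.

Lemma Reg_fin_num : Reg mu U \is a fin_num.
Proof.
rewrite ge0_fin_numE ?Reg_ge0 //.
apply: le_lt_trans (Reg_le_regret_of uninformative) _.
apply: le_lt_trans (regret_of_le_onem (a := 0) _) (ltry _) => u _.
exact: ratio_ge0.
Qed.

Lemma Apr_le_onem (r : R) : Reg mu U = r%:E -> (Apr mu U <= (1 - r)%:E)%E.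
Proof.
move=> Reg_r; apply: ge_ereal_sup => _ [pi <-].
set I := ereal_inf _; have [u0 Uu0] := U_nonempty.
have I_le_ratio u : U u -> (I <= Defs.ratio mu pi u)%E.
  by move=> Uu; apply: ereal_inf_lbound; exists u.
have I_ge0 : (0 <= I)%E.
  by apply: le_ereal_inf_tmp => _ [u _ <-]; exact: ratio_ge0.
have I_fin : I \is a fin_num.
  rewrite ge0_fin_numE // (le_lt_trans (I_le_ratio _ Uu0)) //.
  by rewrite /Defs.ratio; case: ifP => _; rewrite ltry.
rewrite -(fineK I_fin) lee_fin lerBrDr -lerBrDl.
rewrite -lee_fin -Reg_r (le_trans (Reg_le_regret_of pi)) //.
by apply: regret_of_le_onem => u Uu; rewrite fineK ?I_le_ratio.
Qed.

End SenderUtility.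

Theorem proposition4 (R : realType) (Omega : finType) (mu : Omega -> R)
  (U : set (Omega -> bool -> R))
  (mu_pos : forall w, 0 < mu w) (mu_sum : \sum_(w : Omega) mu w = 1)
  (U_nonempty : U !=set0)
  (U_act0 : forall u, U u -> forall w, u w false = 0) :
  Reg mu U = 0%E \/
  (exists r : R, Reg mu U = r%:E /\ 0 < r /\ (Apr mu U <= (r^-1 - 1)%:E)%E).
Proof.
have Reg_r : Reg mu U = (fine (Reg mu U))%:E.
  by rewrite fineK // (Reg_fin_num mu_pos mu_sum U_nonempty).
move: (fine _) Reg_r => r Reg_r.
have r_ge0 : 0 <= r by rewrite -lee_fin -Reg_r (Reg_ge0 mu_pos mu_sum U_nonempty).
have [r0|r_neq0] := eqVneq r 0; first by left; rewrite Reg_r r0.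
have r_gt0 : 0 < r by rewrite lt_def r_neq0.
right; exists r; do 2 split => //.
apply: le_trans (Apr_le_onem mu_pos mu_sum U_nonempty Reg_r) _.
by rewrite lee_fin onem_le_invr_sub1.
Qed.
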